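(* Let $k$ be a field of characteristic $p$. If $G$ is $C_2$ (with $p=2$) or $C_3$ (with $p=3$), then $\mathrm{StMod}(kG)$ has no non-trivial ghosts.
   Context: $\mathrm{StMod}(kG)$ is the stable module category of left $kG$-modules: morphisms $\underline{\mathrm{Hom}}_{kG}(M,N)$ are $kG$-homomorphisms modulo those factoring through a projective module; it is triangulated with unit $k$ and desuspension $\Omega$ ($\Omega M$ the kernel of a projective cover of $M$). A map $f\colon M\to N$ is a ghost if the induced map $\underline{\mathrm{Hom}}_{kG}(\Omega^i k,M)\to\underline{\mathrm{Hom}}_{kG}(\Omega^i k,N)$ (Tate cohomology) is zero for all $i\in\mathbb{Z}$; it is trivial if it factors through a projective module. *)

From HB Require Import structures.
From mathcomp Require Import all_boot all_order all_algebra all_fingroup.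
Set Implicit Arguments. Unset Strict Implicit. Unset Printing Implicit Defensive.
Import GRing.Theory.
Local Open Scope ring_scope.

(* A (left) kG-module, G = the whole finite group gT, presented as a
   k-vector space (arbitrary, not necessarily finite-dimensional) with a
   k-linear action of G. This is the standard equivalence kG-Mod ~ Rep_k(G). *)
Record kGmod (k : fieldType) (gT : finGroupType) := KGMod {
  carrier :> lmodType k;
  act : gT -> carrier -> carrier;
  act_lin : forall g (a : k) (u v : carrier), act g (a *: u + v) = a *: act g u + act g v;
  act1 : forall v, act 1%g v = v;
  actM : forall g h v, act (g * h)%g v = act g (act h v)
}.

Section Defs.
Variables (k : fieldType) (gT : finGroupType).
Local Notation mod := (kGmod k gT).

Definition is_hom (M N : mod) (f : M -> N) : Prop :=
  (forall (a : k) (u v : M), f (a *: u + v) = a *: f u + f v) /\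
  (forall g (v : M), f (act g v) = act g (f v)).

Definition projective (P : mod) : Prop :=
  forall (A B : mod) (pi : A -> B) (f : P -> B),
    is_hom pi -> (forall y, exists x, pi x = y) -> is_hom f ->
    exists g : P -> A, is_hom g /\ forall x, pi (g x) = f x.

(* a map is trivial (zero in StMod) if it factors through a projective *)
Definition trivial_map (M N : mod) (f : M -> N) : Prop :=
  exists (P : mod) (a : M -> P) (b : P -> N),
    [/\ projective P, is_hom a, is_hom b & forall x, f x = b (a x)].

(* Q is (a representative, up to projective summands, of) Omega M:
   the kernel of a surjection from a projective module onto M. *)
Definition IsOmega (M Q : mod) : Prop :=
  exists (P : mod) (pi : P -> M) (iota : Q -> P),
    [/\ projective P, is_hom pi, is_hom iota,
        (forall y, exists x, pi x = y) &
        (injective iota /\ forall x, pi x = 0 <-> exists q, iota q = x)].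

Fixpoint OmegaPow (n : nat) (M Q : mod) : Prop :=
  match n with
  | 0 => Q = M
  | n'.+1 => exists X : mod, OmegaPow n' M X /\ IsOmega X Q
  end.

(* Q represents Omega^{-n} M  (n >= 0): Omega Q represents Omega^{-(n-1)} M *)
Fixpoint OmegaNeg (n : nat) (M Q : mod) : Prop :=
  match n with
  | 0 => Q = M
  | n'.+1 => exists X : mod, OmegaNeg n' M X /\ IsOmega Q X
  end.

Definition triv_act (g : gT) (v : k^o) : k^o := v.

Lemma triv_act_lin g (a : k) (u v : k^o) :
  triv_act g (a *: u + v) = a *: triv_act g u + triv_act g v.
Proof. by []. Qed.
Lemma triv_act1 v : triv_act 1%g v = v. Proof. by []. Qed.
Lemma triv_actM g h v : triv_act (g * h)%g v = triv_act g (triv_act h v).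
Proof. by []. Qed.

Definition triv_mod : mod := KGMod triv_act_lin triv_act1 triv_actM.

(* ghost: the induced map on Tate cohomology
   Hom_stable(Omega^i k, M) -> Hom_stable(Omega^i k, N) vanishes for all i in Z *)
Definition ghost (M N : mod) (f : M -> N) : Prop :=
  is_hom f /\
  forall (n : nat) (Q : mod) (h : Q -> M),
    (OmegaPow n triv_mod Q \/ OmegaNeg n triv_mod Q) ->
    is_hom h -> trivial_map (f \o h).

End Defs.

(* Let g generate G, of prime order p = char k, and put x = g - 1 ([xg g]), so
   that kG = k[x]/(x^p).  A map of the form sum_t t lam t^-1, lam k-linear,
   factors through the free kG-module on the space M, hence is stably trivial;
   for p = 2 and p = 3 the map obtained from lam g^(p-1) is x lam + lam x,
   resp. x^2 lam + x lam x + lam x^2.  Testing the ghost property against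
   Omega^0 k = k, and for p = 3 also against Omega^-1 k = k[x]/(x^2), shows that
   f maps ker x into x^(p-1) N and, for p = 3, ker x^2 into x N, because in a
   projective module the invariants are traces and the kernel of the trace is
   the image of x.  For a nilpotent operator these conditions are exactly what
   is needed to build lam from linear retractions, lifts and factorizations;
   since the modules may be infinite-dimensional, these are obtained with
   Zorn's lemma. *)

From HB Require Import structures.
From mathcomp Require Import all_boot all_algebra fingroup cyclic.
From mathcomp Require classical_sets boolp.
From mathcomp Require Import ring.
Set Implicit Arguments. Unset Strict Implicit. Unset Printing Implicit Defensive.
Import GRing.Theory.
Local Open Scope ring_scope.

(** * Linear choices by Zorn's lemma *)

Section LinearRelations.
Variables (k : fieldType) (V A : lmodType k).
Implicit Types (R G : V -> A -> Prop).

Definition linear_rel R :=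
  R 0 0 /\ forall c v a v' a', R v a -> R v' a' -> R (c *: v + v') (c *: a + a').
Definition functional_rel R := forall v a b, R v a -> R v b -> a = b.
Definition subrel R G := forall v a, R v a -> G v a.

Section MaximalExtension.
Variables (Phi G0 : V -> A -> Prop).
Hypotheses (Phi_lin : linear_rel Phi) (G0_lin : linear_rel G0).
Hypotheses (G0_fun : functional_rel G0) (G0_Phi : subrel G0 Phi).

Let ext (X : classical_sets.set (V * A)) v a := G0 v a \/ X (v, a).
Let admissible X := [/\ linear_rel (ext X), functional_rel (ext X) & subrel (ext X) Phi].

Let admissible0 : admissible classical_sets.set0.
Proof.
split; first split; first by left; case: G0_lin.
- by move=> c v a v' a' [h|//] [h'|//]; left; apply: G0_lin.2.
- by move=> v a b [h|//] [h'|//]; apply: G0_fun h h'.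
- by move=> v a [h|//]; apply: G0_Phi.
Qed.

Let admissible_bigcup F :
  classical_sets.subset F admissible -> classical_sets.total_on F classical_sets.subset ->
  admissible (classical_sets.bigcup F id).
Proof.
move=> FA Ftot; set U := classical_sets.bigcup F id.
have common v a v' a' : ext U v a -> ext U v' a' ->
    exists X, [/\ admissible X, classical_sets.subset X U, ext X v a & ext X v' a'].
  have sub X : F X -> classical_sets.subset X U by move=> FX p Xp; exists X.
  case=> [g|[X FX Xp]]; case=> [g'|[X' FX' Xp']].
  - by exists classical_sets.set0; split; [exact: admissible0| |left|left].
  - by exists X'; split; [exact: FA|exact: sub|left|right].
  - by exists X; split; [exact: FA|exact: sub|right|left].
  - case: (Ftot _ _ FX FX') => [XX'|X'X].
      by exists X'; split; [exact: FA|exact: sub|right; apply: XX'|right].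
    by exists X; split; [exact: FA|exact: sub|right|right; apply: X'X].
split; first split; first by left; case: G0_lin.
- move=> c v a v' a' h h'.
  have [X [[[_ XC] _ _] XU e e']] := common _ _ _ _ h h'.
  by case: (XC c _ _ _ _ e e') => [g|Xp]; [left|right; apply: XU].
- move=> v a b h h'.
  by have [X [[_ Xf _] _ e e']] := common _ _ _ _ h h'; apply: Xf e e'.
- by move=> v a [g|[X FX Xp]]; [apply: G0_Phi|case: (FA X FX) => _ _; apply; right].
Qed.

(* A maximal admissible relation is defined wherever Phi is: otherwise adjoining
   the line through a missing pair (v, a) of Phi keeps it admissible. *)
Let maximal_dom X : admissible X ->
  (forall Y, classical_sets.proper X Y -> ~ admissible Y) ->
  forall v a, Phi v a -> exists b, ext X v b.
Proof.
move=> [[X0 XC] Xf XPhi] Xmax v a Pva; apply: boolp.contrapT => Xv.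
pose B (p : V * A) := exists c w d, ext X w d /\ p = (w + c *: v, d + c *: a).
have XB w d : ext X w d -> B (w, d).
  by move=> h; exists 0, w, d; rewrite !scale0r !addr0.
have extB w d : ext B w d -> B (w, d) by case=> [g|//]; apply: XB; left.
apply: (Xmax B).
  split; first by move=> [w d] Xp; apply: XB; right.
  move=> BX; apply: Xv; exists a; right; apply: BX.
  by exists 1, 0, 0; rewrite !add0r !scale1r.
split; first split; first by right; apply: XB.
- move=> c v1 a1 v2 a2 /extB [c1 [w1 [d1 [X1 [-> ->]]]]] /extB [c2 [scale_e [d2 [X2 [-> ->]]]]].
  right; exists (c * c1 + c2), (c *: w1 + scale_e), (c *: d1 + d2).
  split; first exact: XC.
  by rewrite !scalerDr !scalerA !scalerDl addrACA [in X in (_, X)]addrACA.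
- move=> v1 a1 b1 /extB [c1 [w1 [d1 [X1 [-> ->]]]]] /extB [c2 [scale_e [d2 [X2 []]]]] ev ->.
  have ew : w1 - scale_e = (c2 - c1) *: v.
    by rewrite -(addrK (c1 *: v) w1) ev scalerBl addrAC [scale_e + _]addrC addrK.
  have [ec|nc] := eqVneq c1 c2.
    move: ew; rewrite ec subrr scale0r => /eqP; rewrite subr_eq0 => /eqP ew.
    by rewrite ew in X1; rewrite (Xf _ _ _ X1 X2).
  have ev' : (c2 - c1)^-1 *: (w1 - scale_e) + 0 = v.
    by rewrite addr0 ew scalerA mulVf ?scale1r // subr_eq0 eq_sym.
  exfalso; apply: Xv; exists ((c2 - c1)^-1 *: (d1 - d2) + 0); rewrite -ev'.
  by apply: (XC) => //; rewrite -!scaleN1r addrC [d1 + _]addrC; apply: XC.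
- move=> w d /extB [c [w1 [d1 [X1 [-> ->]]]]].
  by rewrite addrC [d1 + _]addrC; apply: Phi_lin.2 => //; apply: XPhi.
Qed.

Lemma linear_rel_extension : exists G,
  [/\ subrel G0 G, linear_rel G, functional_rel G, subrel G Phi
    & forall v a, Phi v a -> exists b, G v b].
Proof.
have [X [XA Xmax]] := classical_sets.Zorn_bigcup admissible_bigcup.
exists (ext X); case: (XA) => ? ? ?; split => //; first by move=> v a; left.
exact: maximal_dom.
Qed.

End MaximalExtension.
End LinearRelations.

Lemma linear_selection (k : fieldType) (V A : lmodType k) (Phi G0 : V -> A -> Prop) :
  linear_rel Phi -> linear_rel G0 -> functional_rel G0 -> subrel G0 Phi ->
  exists w : {linear V -> A},
    (forall v a, G0 v a -> w v = a) /\ (forall v a, Phi v a -> Phi v (w v)).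
Proof.
move=> Phi_lin G0_lin G0_fun G0_Phi.
have [G1 [G0G1 G1_lin G1_fun G1_Phi G1_dom]] := linear_rel_extension Phi_lin G0_lin G0_fun G0_Phi.
have True_lin : linear_rel (fun (_ : V) (_ : A) => True) by [].
have [G [G1G G_lin G_fun _ G_dom]] := linear_rel_extension True_lin G1_lin G1_fun (fun _ _ _ => I).
have G_tot v : exists a, G v a by apply: (G_dom v 0).
pose w v := proj1_sig (boolp.cid (G_tot v)).
have wG v : G v (w v) by rewrite /w; case: boolp.cid.
have w_lin : linear w.
  by move=> c u v; apply: (G_fun (c *: u + v)); [apply: wG|apply: G_lin.2].
exists (HB.pack_for {linear V -> A} w (GRing.isLinear.Build _ _ _ _ w w_lin)).
split => /=.
  by move=> v a /G0G1 /G1G; apply: G_fun.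
move=> v a /G1_dom [b G1b].
by rewrite (G_fun v _ _ (wG v) (G1G _ _ G1b)); apply: G1_Phi.
Qed.

Section LinearMaps.
Variables (k : fieldType) (U V W : lmodType k).

Definition subspace (T : lmodType k) (D : T -> Prop) :=
  D 0 /\ forall c u v, D u -> D v -> D (c *: u + v).

Lemma subspaceT : subspace (fun _ : U => True). Proof. by []. Qed.

Lemma subspace_ker (h : {linear U -> V}) : subspace (fun u => h u = 0).
Proof. by split=> [|c u v hu hv]; rewrite ?linear0 // linearP hu hv scaler0 addr0. Qed.

Lemma linear_retraction (h : {linear U -> V}) :
  exists e : {linear U -> U}, (forall u, h (e u) = 0) /\ (forall u, h u = 0 -> e u = u).
Proof.
have [h0 h_lin] := subspace_ker h.
have Phi_lin : linear_rel (fun (_ : U) a => h a = 0).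
  by split=> // c u a u' a'; apply: h_lin.
have G0_lin : linear_rel (fun u a => h u = 0 /\ a = u).
  by split=> // c u a u' a' [hu ->] [hu' ->]; split; first by apply: h_lin.
have G0_fun : functional_rel (fun u a => h u = 0 /\ a = u) by move=> u a b [_ ->] [_ ->].
have G0_Phi : subrel (fun u a => h u = 0 /\ a = u) (fun _ a => h a = 0) by move=> u a [hu ->].
have [e [eG eP]] := linear_selection Phi_lin G0_lin G0_fun G0_Phi.
by exists e; split=> [u|u hu]; [apply: (eP u 0); rewrite linear0|apply: eG].
Qed.

Lemma linear_factorization (h : {linear U -> V}) (r : {linear U -> W}) (S : W -> Prop) :
  subspace S -> (forall u, S (r u)) -> (forall u, h u = 0 -> r u = 0) ->
  exists d : {linear V -> W}, (forall u, d (h u) = r u) /\ (forall v, S (d v)).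
Proof.
move=> [S0 S_lin] Sr r_ker.
have Phi_lin : linear_rel (fun (_ : V) a => S a) by split=> // c v a v' a'; apply: S_lin.
have G0_lin : linear_rel (fun v a => exists u, v = h u /\ a = r u).
  split; first by exists 0; rewrite !linear0.
  by move=> c v a v' a' [u [-> ->]] [u' [-> ->]]; exists (c *: u + u'); rewrite !linearP.
have G0_fun : functional_rel (fun v a => exists u, v = h u /\ a = r u).
  move=> v a b [u [-> ->]] [u' [e ->]]; apply/eqP; rewrite -subr_eq0 -linearB.
  by rewrite r_ker // linearB e subrr.
have G0_Phi : subrel (fun v a => exists u, v = h u /\ a = r u) (fun _ a => S a).
  by move=> v a [u [_ ->]].
have [d [dG dS]] := linear_selection Phi_lin G0_lin G0_fun G0_Phi.
by exists d; split=> [u|v]; [apply: dG; exists u|apply: (dS v 0)].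
Qed.

Lemma linear_lift_extension (D E : U -> Prop) (h : {linear V -> W}) (f : {linear U -> W})
    (l : {linear U -> V}) :
  subspace D -> subspace E -> (forall u, E u -> D u /\ h (l u) = f u) ->
  (forall u, D u -> exists v, f u = h v) ->
  exists l' : {linear U -> V},
    (forall u, D u -> h (l' u) = f u) /\ (forall u, E u -> l' u = l u).
Proof.
move=> [D0 D_lin] [E0 E_lin] lE f_im.
have Phi_lin : linear_rel (fun u v => D u /\ h v = f u).
  split; first by rewrite !linear0.
  move=> c u v u' v' [Du hv] [Du' hv'].
  by split; [apply: D_lin|rewrite !linearP hv hv'].
have G0_lin : linear_rel (fun u v => E u /\ v = l u).
  split; first by rewrite linear0.
  by move=> c u v u' v' [Eu ->] [Eu' ->]; split; [apply: E_lin|rewrite linearP].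
have G0_fun : functional_rel (fun u v => E u /\ v = l u) by move=> u v w [_ ->] [_ ->].
have G0_Phi : subrel (fun u v => E u /\ v = l u) (fun u v => D u /\ h v = f u).
  by move=> u v [/lE [Du hl] ->].
have [l' [l'E l'P]] := linear_selection Phi_lin G0_lin G0_fun G0_Phi.
exists l'; split=> [u Du|u Eu]; last by apply: l'E.
by have [v fv] := f_im u Du; have [] := l'P u v (conj Du (esym fv)).
Qed.

Lemma linear_lift (D : U -> Prop) (h : {linear V -> W}) (f : {linear U -> W}) :
  subspace D -> (forall u, D u -> exists v, f u = h v) ->
  exists l : {linear U -> V}, forall u, D u -> h (l u) = f u.
Proof.
move=> D_sub f_im.
have zero_sub : subspace (fun u : U => u = 0).
  by split=> // c u v -> ->; rewrite scaler0 addr0.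
have zero_lift u : u = 0 -> D u /\ h (\0 u) = f u.
  by move=> ->; split; [case: D_sub|rewrite !linear0].
have [l [hl _]] := linear_lift_extension (l := HB.pack_for {linear U -> V} \0)
  D_sub zero_sub zero_lift f_im.
by exists l.
Qed.

End LinearMaps.

(** * Decomposing maps intertwining nilpotent operators *)

Section NilpotentDecomposition.
Variables (k : fieldType) (M N : lmodType k).
Variables (x : {linear M -> M}) (y : {linear N -> N}) (f : {linear M -> N}).
Hypothesis fx : forall m, f (x m) = y (f m).

(* [lam = (l + d) \o e]: [e] retracts onto [ker x], [l] lifts [f] along [y]
   on [ker x], and [d] is the defect [r] of [l], which vanishes on [ker x] and
   under [y], factored through [x]. *)
Lemma square_zero_decomposition :
  (forall m, x (x m) = 0) -> (forall m, x m = 0 -> exists n, f m = y n) ->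
  exists lam : {linear M -> N}, forall m, f m = y (lam m) + lam (x m).
Proof.
move=> xx f_ker.
have [e [xe e_ker]] := linear_retraction x.
have [l yl] := linear_lift (subspace_ker x) f_ker.
pose r := HB.pack_for {linear M -> N} ((f \o (idfun \- e)) \- (l \o x)).
have r_ker m : x m = 0 -> r m = 0.
  by move=> xm0; rewrite /= xm0 e_ker // (subrr m) !linear0 addr0.
have yr m : y (r m) = 0.
  by rewrite /= linearB -fx yl ?xx // linearB xe subr0 subrr.
have [d [dx yd]] := linear_factorization (subspace_ker y) yr r_ker.
exists (HB.pack_for {linear M -> N} ((l \+ d) \o e)) => m /=.
rewrite linearD yd addr0 yl ?xe // (e_ker (x m) (xx m)) dx /=.
by rewrite [l _ + _]addrC subrK -linearD addrC subrK.
Qed.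

Section CubeZero.
Hypothesis xxx : forall m, x (x (x m)) = 0.
Hypothesis f_ker1 : forall m, x m = 0 -> exists n, f m = y (y n).
Hypothesis f_ker2 : forall m, x (x m) = 0 -> exists n, f m = y n.

(* The last condition is what makes the correction term of
   [cube_zero_decomposition] vanish under [y]; it is compatible with the third
   because [y (f (m - e m)) = f (x m)]. *)
Let cube_zero_lift : exists (e : {linear M -> M}) (l0 : {linear M -> N}),
  [/\ forall m, x (e m) = 0, forall m, x m = 0 -> e m = m,
      forall m, x m = 0 -> y (y (l0 m)) = f m
    & forall m, x (x m) = 0 -> y (l0 (x m)) = f (m - e m)].
Proof.
have [e [xe e_ker]] := linear_retraction x.
pose q := HB.pack_for {linear M -> N} (f \o (idfun \- e)).
have q_ker m : x m = 0 -> q m = 0 by move=> xm0; rewrite /= e_ker // subrr linear0.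
have [s [sx _]] := linear_factorization (subspaceT N) (fun m => I) q_ker.
pose E v := exists m, x (x m) = 0 /\ v = x m.
have E_sub : subspace E.
  split; first by exists 0; rewrite !linear0.
  move=> c _ _ [m [xxm ->]] [m' [xxm' ->]].
  by exists (c *: m + m'); rewrite !linearP xxm xxm' scaler0 addr0.
have s_im v : E v -> exists n, s v = y n.
  move=> [m [xxm ->]]; rewrite sx; apply: f_ker2.
  by rewrite !linearB xe linear0 subr0.
have [l1 yl1] := linear_lift E_sub s_im.
pose yy := HB.pack_for {linear N -> N} (y \o y).
have l1_lift v : E v -> x v = 0 /\ yy (l1 v) = f v.
  move=> Ev; have [m [xxm vE]] := Ev; split; first by rewrite vE.
  by rewrite /= yl1 // vE sx /= -fx linearB xe subr0.
have [l0 [yyl0 l0E]] := linear_lift_extension (subspace_ker x) E_sub l1_lift f_ker1.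
exists e, l0; split=> // m xxm.
by rewrite l0E; [rewrite yl1 ?sx //; exists m|exists m].
Qed.

Lemma cube_zero_decomposition : exists lam : {linear M -> N},
  forall m, f m = y (y (lam m)) + y (lam (x m)) + lam (x (x m)).
Proof.
have [e [l0 [xe e_ker yyl0 yl0]]] := cube_zero_lift.
pose r := HB.pack_for {linear M -> N}
  (((f \o (idfun \- e)) \- (y \o l0 \o e \o x)) \- (l0 \o x \o x)).
have r_ker m : x (x m) = 0 -> r m = 0.
  by move=> xxm; rewrite /= (e_ker (x m) xxm) yl0 // xxm subrr linear0 subr0.
have yr m : y (r m) = 0.
  rewrite /= !(linearB y) -fx (linearB x) xe subr0 (yyl0 _ (xe _)) (yl0 _ (xxx m)).
  by rewrite -linearB subrr.
pose xx := HB.pack_for {linear M -> M} (x \o x).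
have [d [dxx yd]] := linear_factorization (h := xx) (subspace_ker y) yr r_ker.
exists (HB.pack_for {linear M -> N} ((l0 \+ d) \o e)) => m /=.
rewrite !linearD !yd linear0 !addr0 (yyl0 _ (xe m)) (e_ker _ (xxx m)) (dxx m) /=.
by rewrite [l0 _ + _]addrC subrK -addrA [y _ + _]addrC subrK -linearD addrC subrK.
Qed.

End CubeZero.
End NilpotentDecomposition.

(** * Free and projective kG-modules *)

HB.instance Definition _ (k : fieldType) (gT : finGroupType) (M : kGmod k gT) (t : gT) :=
  GRing.isLinear.Build k M M *:%R (act t) (act_lin t).

Section Modules.
Variables (k : fieldType) (gT : finGroupType).
Local Notation mod := (kGmod k gT).

Definition hom_linear (M N : mod) (f : M -> N) (hf : is_hom f) : {linear M -> N} :=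
  HB.pack_for {linear M -> N} f (GRing.isLinear.Build k M N *:%R f hf.1).

Section HomLinear.
Variables (M N : mod) (f : M -> N) (hf : is_hom f).

Lemma hom0 : f 0 = 0. Proof. exact: (linear0 (hom_linear hf)). Qed.
Lemma homB u v : f (u - v) = f u - f v. Proof. exact: (linearB (hom_linear hf)). Qed.
Lemma hom_sum (I : Type) (r : seq I) (P : pred I) (F : I -> M) :
  f (\sum_(i <- r | P i) F i) = \sum_(i <- r | P i) f (F i).
Proof. exact: (linear_sum (hom_linear hf)). Qed.

End HomLinear.

Section FreeModule.
Variable V : lmodType k.

Definition free_act (t : gT) (phi : {ffun gT -> V}) : {ffun gT -> V} :=
  [ffun s => phi (t^-1 * s)%g].

Lemma free_act_lin t (c : k) (u v : {ffun gT -> V}) :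
  free_act t (c *: u + v) = c *: free_act t u + free_act t v.
Proof. by apply/ffunP => s; rewrite !ffunE. Qed.

Lemma free_act1 (v : {ffun gT -> V}) : free_act 1 v = v.
Proof. by apply/ffunP => s; rewrite ffunE invg1 mul1g. Qed.

Lemma free_actM t h (v : {ffun gT -> V}) : free_act (t * h) v = free_act t (free_act h v).
Proof. by apply/ffunP => s; rewrite !ffunE invMg mulgA. Qed.

Definition free_mod : mod := KGMod free_act_lin free_act1 free_actM.

Definition single (t : gT) (v : V) : {ffun gT -> V} := [ffun s => if s == t then v else 0].

Lemma single_lin t : linear (single t).
Proof. by move=> c u v; apply/ffunP => s; rewrite !ffunE; case: eqP; rewrite ?scaler0 ?addr0. Qed.

HB.instance Definition _ t := GRing.isLinear.Build k V _ *:%R (single t) (single_lin t).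

Lemma ffun_single (phi : {ffun gT -> V}) : phi = \sum_t single t (phi t).
Proof.
apply/ffunP => s; rewrite sum_ffunE (bigD1 s) //= ffunE eqxx big1 ?addr0 //.
by move=> t ts; rewrite ffunE eq_sym (negbTE ts).
Qed.

Lemma act_single t v : act t (single 1 v : free_mod) = single t v.
Proof. by apply/ffunP => s; rewrite !ffunE -eq_mulVg1 eq_sym. Qed.

Definition free_hom (N : mod) (w : V -> N) (phi : free_mod) : N := \sum_s act s (w (phi s)).

Lemma free_hom_is_hom (N : mod) (w : {linear V -> N}) : is_hom (free_hom w).
Proof.
split=> [c phi psi|t phi].
  rewrite /free_hom scaler_sumr -big_split; apply: eq_bigr => s _.
  by rewrite !ffunE !linearP.
rewrite /free_hom linear_sum (reindex_inj (mulgI t)); apply: eq_bigr => s _.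
by rewrite ffunE mulKg actM.
Qed.

Lemma free_hom_single (N : mod) (w : {linear V -> N}) t v :
  free_hom w (single t v) = act t (w v).
Proof.
rewrite /free_hom (bigD1 t) //= ffunE eqxx big1 ?addr0 // => s st.
by rewrite ffunE (negbTE st) !linear0.
Qed.

Lemma free_mod_projective : projective free_mod.
Proof.
move=> A B pi f hpi pi_onto hf.
pose fs := HB.pack_for {linear V -> B} (hom_linear hf \o single 1).
have fs_im v : True -> exists a, fs v = hom_linear hpi a.
  by move=> _; have [a <-] := pi_onto (fs v); exists a.
have [l pil] := linear_lift (subspaceT V) fs_im.
exists (free_hom l); split; first exact: free_hom_is_hom.
move=> phi; rewrite [in RHS](ffun_single phi) (hom_sum hf) /free_hom (hom_sum hpi).
have pil' v : pi (l v) = f (single 1 v) := pil v I.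
by apply: eq_bigr => s _; rewrite hpi.2 pil' -hf.2 act_single.
Qed.

End FreeModule.

Definition trace_map (M N : mod) (lam : M -> N) (m : M) : N :=
  \sum_t act t (lam (act t^-1 m)).

Lemma trace_map_trivial (M N : mod) (lam : {linear M -> N}) : trivial_map (trace_map lam).
Proof.
pose a (m : M) : free_mod M := [ffun s => act s^-1 m].
have ha : is_hom a.
  split=> [c u v|t m]; apply/ffunP => s; rewrite !ffunE ?linearP //.
  by rewrite invMg invgK actM.
exists (free_mod M), a, (free_hom lam); split.
- exact: free_mod_projective.
- exact: ha.
- exact: free_hom_is_hom.
- by move=> m; apply: eq_bigr => s _; rewrite ffunE.
Qed.

Lemma projective_split (P : mod) : projective P ->
  exists sigma : P -> free_mod P, is_hom sigma /\ forall z, free_hom idfun (sigma z) = z.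
Proof.
move=> pP.
have onto (z : P) : exists phi : free_mod P, free_hom idfun phi = z.
  by exists (single 1 z); rewrite free_hom_single act1.
have id_hom : is_hom (@idfun P) by [].
have [sigma [hs sK]] := pP _ _ _ idfun (free_hom_is_hom idfun) onto id_hom.
by exists sigma.
Qed.

Lemma projective_fixed_trace (P : mod) (z : P) : projective P ->
  (forall t, act t z = z) -> exists y, z = \sum_t act t y.
Proof.
move=> /projective_split [sigma [hs sK]] z_fix.
have phi_const t : sigma z t = sigma z 1%g.
  have := congr1 (fun phi : {ffun gT -> P} => phi t) (hs.2 t z).
  by rewrite z_fix ffunE mulVg => <-.
exists (free_hom idfun (single 1 (sigma z 1%g))).
rewrite -[in LHS](sK z) [in LHS](ffun_single (sigma z)) (hom_sum (free_hom_is_hom idfun)).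
apply: eq_bigr => t _.
by rewrite phi_const -act_single (free_hom_is_hom idfun).2.
Qed.

Lemma ghost_fixed_trace (M N : mod) (f : M -> N) : ghost f ->
  forall v, (forall t, act t v = v) -> exists n, f v = \sum_t act t n.
Proof.
move=> [hf f_ghost] v v_fix.
pose h (c : triv_mod k gT) : M := c *: v.
have hh : is_hom h.
  split=> [c a b|t c]; last by rewrite /h linearZ /= v_fix.
  by rewrite /h scalerA -scalerDl.
have [P [a [b [pP ha hb fab]]]] := f_ghost 0 _ h (or_introl erefl) hh.
have [y ay] : exists y, a 1 = \sum_t act t y.
  by apply: projective_fixed_trace => // t; rewrite -ha.2.
exists (b y); have -> : v = h 1 by rewrite /h scale1r.
rewrite -[f (h 1)]/((f \o h) 1) fab ay (hom_sum hb).
by apply: eq_bigr => t _; rewrite hb.2.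
Qed.

Lemma trivial_map_eq (M N : mod) (f1 f2 : M -> N) :
  f1 =1 f2 -> trivial_map f1 -> trivial_map f2.
Proof.
by move=> e [P [a [b [pP ha hb fab]]]]; exists P, a, b; split=> // m; rewrite -e fab.
Qed.

End Modules.

(** * Cyclic groups of order 2 and 3 *)

HB.lock Definition xg (k : fieldType) (gT : finGroupType) (g : gT) (M : kGmod k gT) (v : M) : M :=
  act g v - v.

Lemma xg_lin (k : fieldType) (gT : finGroupType) (g : gT) (M : kGmod k gT) : linear (@xg k gT g M).
Proof. by move=> c u v; rewrite unlock linearP scalerBr addrACA opprD. Qed.

HB.instance Definition _ (k : fieldType) (gT : finGroupType) (g : gT) (M : kGmod k gT) :=
  GRing.isLinear.Build k M M *:%R (@xg k gT g M) (@xg_lin k gT g M).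

Section CyclicGroup.
Variables (k : fieldType) (gT : finGroupType) (g : gT).
Hypothesis gen : forall t : gT, t \in <[g]>%g.
Local Notation mod := (kGmod k gT).

Lemma xgE (M : mod) (v : M) : xg g v = act g v - v. Proof. by rewrite unlock. Qed.

Lemma act_g (M : mod) (v : M) : act g v = v + xg g v.
Proof. by rewrite xgE addrC subrK. Qed.

Lemma hom_xg (M N : mod) (f : M -> N) (hf : is_hom f) v : f (xg g v) = xg g (f v).
Proof. by rewrite !xgE (homB hf) hf.2. Qed.

Lemma sum_cycle (W : nmodType) (F : gT -> W) :
  \sum_t F t = \sum_(i < #[g]%g) F (g ^+ i)%g.
Proof.
have inj : injective (fun i : 'I_#[g]%g => (g ^+ i)%g).
  by move=> i j /eqP; rewrite eq_expg_ord // => /eqP.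
have bij : bijective (fun i : 'I_#[g]%g => (g ^+ i)%g).
  by apply: (inj_card_bij inj); rewrite card_ord; apply/subset_leq_card/subsetP => t _.
by rewrite (reindex _ (onW_bij _ bij)).
Qed.

Lemma trace_xg (M : mod) (v : M) : \sum_t act t (xg g v) = 0.
Proof.
under eq_bigr do rewrite xgE linearB /= -actM.
by apply/eqP; rewrite sumrB subr_eq0 [X in _ == X](reindex_inj (mulIg g)).
Qed.

Lemma fixed_xg (M : mod) (v : M) : xg g v = 0 -> forall t, act t v = v.
Proof.
move=> /eqP; rewrite xgE subr_eq0 => /eqP gv t.
have /cycleP [i ->] := gen t.
by elim: i => [|i IH]; rewrite ?expg0 ?act1 // expgS actM IH.
Qed.

Definition dlog (t : gT) : nat := s2val (cyclePmin (gen t)).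

Lemma dlog_ltn t : (dlog t < #[g]%g)%N.
Proof. by rewrite /dlog; case: cyclePmin. Qed.

Lemma expg_dlog t : (g ^+ dlog t)%g = t.
Proof. by rewrite /dlog; case: cyclePmin. Qed.

Lemma dlog_expg i : (i < #[g]%g)%N -> dlog (g ^+ i)%g = i.
Proof.
move=> lti; have := eq_expg_ord (Ordinal (dlog_ltn (g ^+ i)%g)) (Ordinal lti) (leqnn _).
by rewrite /= expg_dlog eqxx => /esym /eqP [].
Qed.

Lemma free_trace_ker (V : lmodType k) (phi : free_mod gT V) :
  \sum_t act t phi = 0 -> exists psi, phi = xg g psi.
Proof.
move=> /(congr1 (fun psi : {ffun gT -> V} => psi 1%g)); rewrite sum_ffunE ffunE.
under eq_bigr do rewrite ffunE mulg1.
rewrite (reindex_inj invg_inj); under eq_bigr do rewrite /= invgK.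
rewrite sum_cycle => phi_sum.
pose psi : free_mod gT V := [ffun t => - \sum_(j < (dlog t).+1) phi (g ^+ j)%g].
exists psi; apply/ffunP => s; rewrite xgE !ffunE -[s]expg_dlog.
have := dlog_ltn s; case: (dlog s) => [|i] lti.
  rewrite (dlog_expg lti) expg0 mulg1 invg_expg dlog_expg ?ltn_predL //.
  by rewrite prednK // phi_sum big_ord1 expg0 oppr0 sub0r opprK.
have -> : (g^-1 * g ^+ i.+1 = g ^+ i)%g by rewrite expgS mulKg.
rewrite (dlog_expg lti) (dlog_expg (ltnW lti)).
by rewrite [X in _ - - X]big_ord_recr /= opprK addKr.
Qed.

Lemma projective_trace_ker (P : mod) (z : P) : projective P ->
  \sum_t act t z = 0 -> exists y, z = xg g y.
Proof.
move=> /projective_split [sigma [hs sK]] zN.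
have [psi sigma_z] : exists psi, sigma z = xg g psi.
  apply: free_trace_ker; under eq_bigr do rewrite -hs.2.
  by rewrite -(hom_sum hs) zN (hom0 hs).
exists (free_hom idfun psi).
by rewrite -[LHS]sK sigma_z (hom_xg (free_hom_is_hom idfun)).
Qed.

Lemma dlog1 : dlog 1%g = 0%N.
Proof. by rewrite -(expg0 g) dlog_expg. Qed.

Lemma act_expg_ker_xg2 (M : mod) (v : M) i :
  xg g (xg g v) = 0 -> act (g ^+ i)%g v = v + i%:R *: xg g v.
Proof.
move=> xxv; elim: i => [|i IH]; first by rewrite expg0 act1 scale0r addr0.
rewrite expgSr actM act_g linearD /= IH (fixed_xg xxv).
by rewrite -natr1 scalerDl scale1r [RHS]addrA.
Qed.

Lemma act_ker_xg2 (M : mod) (v : M) :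
  xg g (xg g v) = 0 -> forall t, act t v = v + (dlog t)%:R *: xg g v.
Proof. by move=> xxv t; rewrite -{1}(expg_dlog t) act_expg_ker_xg2. Qed.

Section PrimeOrder.
Hypothesis charg : (#[g]%g \in [pchar k])%R.

Lemma mulrn_order (W : lmodType k) (u : W) : u *+ #[g]%g = 0.
Proof. by rewrite -scaler_nat (GRing.pcharf0 charg) scale0r. Qed.

Lemma dlogM t s :
  (dlog (t * s)%g)%:R = (dlog t)%:R + (dlog s)%:R :> k.
Proof.
have -> : (t * s = g ^+ ((dlog t + dlog s) %% #[g]))%g.
  by rewrite expg_mod_order expgD !expg_dlog.
by rewrite dlog_expg ?ltn_pmod ?order_gt0 // (GRing.natr_mod_pchar charg) natrD.
Qed.

Definition jordan_act (t : gT) (p : k^o * k^o) : k^o * k^o := (p.1 + (dlog t)%:R * p.2, p.2).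

Lemma jordan_act_lin t (c : k) (p q : k^o * k^o) :
  jordan_act t (c *: p + q) = c *: jordan_act t p + jordan_act t q.
Proof.
case: p q => [p1 p2] [q1 q2]; rewrite /jordan_act /=; congr pair.
by rewrite /GRing.scale /= /GRing.scale /=; ring.
Qed.

Lemma jordan_act1 p : jordan_act 1 p = p.
Proof. by case: p => p1 p2; rewrite /jordan_act dlog1 mul0r addr0. Qed.

Lemma jordan_actM t s p : jordan_act (t * s) p = jordan_act t (jordan_act s p).
Proof. by case: p => p1 p2; rewrite /jordan_act /= dlogM mulrDl addrA addrAC. Qed.

Definition jordan2 : mod := KGMod jordan_act_lin jordan_act1 jordan_actM.

End PrimeOrder.

Section Order2.
Hypotheses (og : #[g]%g = 2%N) (char2 : 2%N \in [pchar k]).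
Let charg : (#[g]%g \in [pchar k])%R. Proof. by rewrite og. Qed.

Lemma sum2 (W : nmodType) (F : gT -> W) : \sum_t F t = F 1%g + F g.
Proof. by rewrite sum_cycle og big_ord_recr big_ord1 expg0 expg1. Qed.

Lemma trace_act2 (M : mod) (v : M) : \sum_t act t v = xg g v.
Proof.
by rewrite sum2 act1 act_g addrA -mulr2n -og mulrn_order // add0r.
Qed.

Lemma xg2 (M : mod) (v : M) : xg g (xg g v) = 0.
Proof. by rewrite -trace_act2 trace_xg. Qed.

Lemma trace_map2 (M N : mod) (lam : {linear M -> N}) m :
  trace_map (lam \o act g) m = xg g (lam m) + lam (xg g m).
Proof.
rewrite /trace_map sum2 /= invg1 !act1 -actM mulgV act1 !act_g linearD.
by rewrite addrACA -mulr2n -og mulrn_order // add0r addrC.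
Qed.

Theorem order2_no_ghosts (M N : mod) (f : M -> N) : ghost f -> trivial_map f.
Proof.
move=> fg; have hf := fg.1.
have f_ker m : xg g m = 0 -> exists n, hom_linear hf m = xg g n.
  by move=> /fixed_xg /(ghost_fixed_trace fg) [n fn]; exists n; rewrite -trace_act2.
have [lam flam] := square_zero_decomposition (f := hom_linear hf) (hom_xg hf) (@xg2 M) f_ker.
apply: trivial_map_eq (trace_map_trivial (HB.pack_for {linear M -> N} (lam \o act g))).
by move=> m; rewrite trace_map2 -flam.
Qed.

End Order2.

Section Order3.
Hypotheses (og : #[g]%g = 3%N) (char3 : 3%N \in [pchar k]).
Let charg : (#[g]%g \in [pchar k])%R. Proof. by rewrite og. Qed.

Lemma sum3 (W : nmodType) (F : gT -> W) : \sum_t F t = F 1%g + F g + F (g ^+ 2)%g.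
Proof. by rewrite sum_cycle og 2!big_ord_recr big_ord1 expg0 expg1. Qed.

Lemma addrrr_char3 (W : lmodType k) (u : W) : u + u + u = 0.
Proof. by rewrite -(mulrn_order charg u) og !mulrS mulr0n addr0 addrA. Qed.

Lemma addrr_char3 (W : lmodType k) (u : W) : u + u = - u.
Proof. by apply/eqP; rewrite -subr_eq0 opprK addrrr_char3. Qed.

Lemma act_g2 (M : mod) (v : M) : act (g ^+ 2)%g v = v - xg g v + xg g (xg g v).
Proof.
rewrite expgS expg1 actM (act_g v) linearD /= !act_g addrA.
by rewrite -[v + xg g v + xg g v]addrA addrr_char3.
Qed.

Lemma trace_act3 (M : mod) (v : M) : \sum_t act t v = xg g (xg g v).
Proof.
by rewrite sum3 act1 act_g act_g2 [v + (v + _)]addrA addrA addrACA addrrr_char3 subrr !add0r.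
Qed.

Lemma xg3 (M : mod) (v : M) : xg g (xg g (xg g v)) = 0.
Proof. by rewrite -trace_act3 trace_xg. Qed.

Lemma trace_map3 (M N : mod) (lam : {linear M -> N}) m :
  trace_map (lam \o act (g ^+ 2)%g) m =
    xg g (xg g (lam m)) + xg g (lam (xg g m)) + lam (xg g (xg g m)).
Proof.
have g2g : (g ^+ 2 / g = g)%g by rewrite expgS expg1 mulgK.
rewrite /trace_map sum3 /= invg1 !act1 -!actM g2g mulgV act1.
rewrite act_g2 (act_g m) act_g act_g2 !linearD !linearN /=.
set A := lam m; set B := lam (xg g m); set C := lam (xg g (xg g m)).
set D := xg g A; set E := xg g B; set F := xg g D.
rewrite [A - B + C + _]addrACA [A - B + (A + B)]addrACA addNr addr0.
rewrite [A + A + _ + _]addrACA [A + A + (A - D)]addrA addrrr_char3 add0r.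
rewrite [C + (D + E)]addrCA -[D + (C + E) + F]addrA addKr.
by rewrite [RHS]addrC [F + E]addrC addrA.
Qed.

Lemma dlog_g : dlog g = 1%N.
Proof. by rewrite -{1}(expg1 g) dlog_expg ?og. Qed.

Lemma dlog_g2 : dlog (g ^+ 2)%g = 2%N.
Proof. by rewrite dlog_expg ?og. Qed.

Lemma cover3 t : t = 1%g \/ t = g \/ t = (g ^+ 2)%g.
Proof.
rewrite -(expg_dlog t); have := dlog_ltn t; rewrite og.
by case: (dlog t) => [|[|[|]]] //= _; [left|right; left|right; right]; rewrite ?expg1.
Qed.

Lemma g_neq1 : (g != 1)%g.
Proof. by apply/eqP => /(congr1 dlog); rewrite dlog_g dlog1. Qed.

Lemma g2_neq1 : (g ^+ 2 != 1)%g.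
Proof. by apply/eqP => /(congr1 dlog); rewrite dlog_g2 dlog1. Qed.

Lemma g2_neqg : (g ^+ 2 != g)%g.
Proof. by apply/eqP => /(congr1 dlog); rewrite dlog_g2 dlog_g. Qed.

Lemma natr2_char3 : 2%:R = - 1 :> k.
Proof. by rewrite mulr2n (addrr_char3 (1 : k^o)). Qed.

Local Notation J := (jordan2 charg).
Let e : J := (0, 1).

Lemma act_jordan_gen t : act t e = ((dlog t)%:R, 1) :> k^o * k^o.
Proof. by rewrite /= /jordan_act /= mulr1 add0r. Qed.

Lemma trace_jordan_gen : \sum_t act t e = 0.
Proof.
rewrite sum3 !act_jordan_gen dlog1 dlog_g dlog_g2 natr2_char3.
by congr pair => /=; [rewrite add0r subrr|exact: (addrrr_char3 (1 : k^o))].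
Qed.

Let scale_e_lin : linear (fun c : k^o => c *: e).
Proof. by move=> a b c; rewrite scalerA -scalerDl. Qed.

Let scale_e : {linear k^o -> J} := HB.pack_for {linear k^o -> J} (fun c : k^o => c *: e)
  (GRing.isLinear.Build k k^o J *:%R (fun c : k^o => c *: e) scale_e_lin).

Lemma free_hom_jordanE (phi : free_mod gT k^o) :
  free_hom scale_e phi = (phi g - phi (g ^+ 2)%g, phi 1%g + phi g + phi (g ^+ 2)%g).
Proof.
rewrite /free_hom sum3 /= /jordan_act dlog1 dlog_g dlog_g2 natr2_char3.
by congr pair; rewrite /= /GRing.scale /=; ring.
Qed.

Lemma OmegaNeg1_jordan2 : OmegaNeg 1 (triv_mod k gT) J.
Proof.
exists (triv_mod k gT); split=> //.
pose const (c : triv_mod k gT) : free_mod gT k^o := [ffun=> c].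
exists (free_mod gT k^o), (free_hom scale_e), const; split.
- exact: free_mod_projective.
- exact: free_hom_is_hom.
- by split=> [c a b|t c]; apply/ffunP => s; rewrite !ffunE.
- move=> [a b]; exists (single 1 (b - a) + single g a).
  rewrite free_hom_jordanE !ffunE eqxx [1%g == g]eq_sym.
  rewrite (negbTE g_neq1) (negbTE g2_neq1) (negbTE g2_neqg).
  by rewrite !addr0 !add0r subr0 eqxx subrK.
- split=> [c c' /(congr1 (fun phi : {ffun gT -> k^o} => phi 1%g))|phi]; first by rewrite !ffunE.
  rewrite free_hom_jordanE; split=> [phi0|[c <-]].
    have := congr1 snd phi0; have /eqP := congr1 fst phi0.
    rewrite /= subr_eq0 => /eqP phi_g; rewrite phi_g -addrA addrr_char3 => /eqP.
    rewrite subr_eq0 => /eqP phi_1; exists (phi 1%g); apply/ffunP => s; rewrite ffunE.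
    by case: (cover3 s) => [->|[->|->]]; rewrite ?phi_g phi_1.
  by rewrite /const !ffunE subrr (addrrr_char3 (c : k^o)).
Qed.

Lemma ghost_ker_xg2 (M N : mod) (f : M -> N) : ghost f ->
  forall v, xg g (xg g v) = 0 -> exists n, f v = xg g n.
Proof.
move=> [hf f_ghost] v xxv.
pose h (p : J) : M := p.1 *: xg g v + p.2 *: v.
have hh : is_hom h.
  split=> [c p q|t [p1 p2]]; first by rewrite /h scalerDr !scalerA addrACA -!scalerDl.
  rewrite /h linearD !linearZ /= (fixed_xg xxv) (act_ker_xg2 xxv).
  by rewrite scalerDr scalerA [p2 * _]mulrC addrCA -scalerDl addrC.
have [P [a [b [pP ha hb fab]]]] := f_ghost 1%N _ h (or_intror OmegaNeg1_jordan2) hh.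
have [y ay] : exists y, a e = xg g y.
  apply: projective_trace_ker => //; under eq_bigr do rewrite -ha.2.
  by rewrite -(hom_sum ha) trace_jordan_gen (hom0 ha).
exists (b y); have -> : v = h e by rewrite /h scale0r add0r scale1r.
by rewrite -[f (h e)]/((f \o h) e) fab /= ay (hom_xg hb).
Qed.

Theorem order3_no_ghosts (M N : mod) (f : M -> N) : ghost f -> trivial_map f.
Proof.
move=> fg; have hf := fg.1.
have f_ker1 m : xg g m = 0 -> exists n, hom_linear hf m = xg g (xg g n).
  by move=> /fixed_xg /(ghost_fixed_trace fg) [n fn]; exists n; rewrite -trace_act3.
have [lam flam] := cube_zero_decomposition (f := hom_linear hf) (hom_xg hf) (@xg3 M)
  f_ker1 (ghost_ker_xg2 fg).
apply: trivial_map_eq (trace_map_trivial (HB.pack_for {linear M -> N} (lam \o act (g ^+ 2)%g))).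
by move=> m; rewrite trace_map3 -flam.
Qed.

End Order3.

End CyclicGroup.

Lemma exists_generator (gT : finGroupType) (p : nat) : prime p -> #|gT| = p ->
  exists g : gT, (forall t : gT, t \in <[g]>%g) /\ #[g]%g = p.
Proof.
move=> p_pr cardT.
have [g g1] : exists g : gT, g != 1%g.
  have : [set~ 1%g] != set0 :> {set gT}.
    by rewrite -card_gt0 cardsC1 cardT -subn1 subn_gt0 prime_gt1.
  by case/set0Pn => g; rewrite in_setC1; exists g.
have og : #[g]%g = p.
  have og_dvd : (#[g]%g %| p)%N by rewrite -cardT -cardsT order_dvdG ?inE.
  by apply/(prime_nt_dvdP p_pr _ og_dvd); rewrite order_eq1.
exists g; split=> // t; suff -> : <[g]>%g = [set: gT] by rewrite inE.
by apply/eqP; rewrite eqEcard subsetT cardsT cardT -og; exact: leqnn.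
Qed.

Local Close Scope ring_scope.

Theorem proposition3p1 (k : fieldType) (gT : finGroupType) :
  ((#|gT| = 2 /\ (2 \in [pchar k]%R)) \/ (#|gT| = 3 /\ (3 \in [pchar k]%R))) ->
  forall (M N : kGmod k gT) (f : M -> N), ghost f -> trivial_map f.
Proof.
case=> [[card2 char2]|[card3 char3]] M N f.
- have [g [gen og]] := exists_generator (isT : prime 2) card2.
  exact: (order2_no_ghosts gen og char2).
- have [g [gen og]] := exists_generator (isT : prime 3) card3.
  exact: (order3_no_ghosts gen og char3).
Qed.
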